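(* Let $m\ge 2$, let $f:\mathbb{R}^n\to\mathbb{R}$ be convex, let $\mathbf{x}_0\in\mathbb{R}^n$ not be a minimizer of $f$, let $\lambda\ge 0$, let $\mathbf{z}\in\mathbb{R}^m$ be nonzero and set $\bar{\mathbf{z}}=\sqrt m\,\mathbf{z}$. Write $\delta=\delta(\lambda\partial f(\mathbf{x}_0))$, let $\gamma_m=\sqrt2\,\Gamma(\tfrac{m+1}{2})/\Gamma(\tfrac m2)$ (the expected Euclidean norm of a standard Gaussian vector in $\mathbb{R}^m$), and fix $0<t<\sqrt{m-1}-\sqrt{\delta}$. Define $$\ell(t)=2\|\mathbf{z}\|_2\,\frac{\sqrt{\delta}+t}{\sqrt{m-1}-\sqrt{\delta}-t}.$$ Suppose $\mathbf{g}\in\mathbb{R}^m$ and $\mathbf{h}\in\mathbb{R}^n$ satisfy: (1) $\|\mathbf{g}\|_2\ge\gamma_m-t/4$; (2) $\mathrm{dist}(\mathbf{h},\lambda\partial f(\mathbf{x}_0))\le\sqrt{\delta}+t/4$; (3) $\mathbf{g}^T\bar{\mathbf{z}}\le (t/4)\|\bar{\mathbf{z}}\|_2$. Then $$\mathcal{L}(t;\mathbf{g},\mathbf{h}):=\inf_{\alpha\ge\ell(t)}\Big\{\sqrt{\alpha^2\|\mathbf{g}\|_2^2+\|\bar{\mathbf{z}}\|_2^2-2\alpha\,\mathbf{g}^T\bar{\mathbf{z}}}-\alpha\,\mathrm{dist}(\mathbf{h},\lambda\partial f(\mathbf{x}_0))\Big\}>\|\bar{\mathbf{z}}\|_2.$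$
   Context: For a convex $f:\mathbb{R}^n\to\mathbb{R}$, the subdifferential at $\mathbf{x}_0$ is $\partial f(\mathbf{x}_0)=\{\mathbf{s}\in\mathbb{R}^n: f(\mathbf{x}_0+\mathbf{w})\ge f(\mathbf{x}_0)+\mathbf{s}^T\mathbf{w}\ \forall \mathbf{w}\in\mathbb{R}^n\}$, and for $\lambda\ge0$, $\lambda\partial f(\mathbf{x}_0)=\{\lambda\mathbf{s}:\mathbf{s}\in\partial f(\mathbf{x}_0)\}$ (a nonempty, convex, compact set). For a nonempty closed convex set $\mathcal{C}\subset\mathbb{R}^n$, $\mathrm{dist}(\mathbf{v},\mathcal{C})=\min_{\mathbf{s}\in\mathcal{C}}\|\mathbf{v}-\mathbf{s}\|_2$, and the Gaussian squared distance is $\delta(\mathcal{C})=\mathbb{E}_{\mathbf{h}}[\mathrm{dist}^2(\mathbf{h},\mathcal{C})]$, where $\mathbf{h}\in\mathbb{R}^n$ has i.i.d. $\mathcal{N}(0,1)$ entries. *)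

From Stdlib Require Import Reals Lra ClassicalEpsilon.
Open Scope R_scope.

(* Vectors of R^n are represented as functions nat -> R; only the
   coordinates 0..n-1 are meaningful (all operations below only read them). *)
Fixpoint vsum (n : nat) (F : nat -> R) : R :=
  match n with O => 0 | S k => vsum k F + F k end.

Definition dot (n : nat) (u v : nat -> R) : R := vsum n (fun i => u i * v i).
Definition norm (n : nat) (u : nat -> R) : R := sqrt (dot n u u).
Definition vadd (u v : nat -> R) : nat -> R := fun i => u i + v i.
Definition vsub (u v : nat -> R) : nat -> R := fun i => u i - v i.
Definition vscale (a : R) (u : nat -> R) : nat -> R := fun i => a * u i.

(* a function on nat -> R that is genuinely a function on R^n *)
Definition depends_only_on (n : nat) (f : (nat -> R) -> R) : Prop :=
  forall x y, (forall i, (i < n)%nat -> x i = y i) -> f x = f y.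

Definition convex (f : (nat -> R) -> R) : Prop :=
  forall x y th, 0 <= th <= 1 ->
    f (vadd (vscale th x) (vscale (1 - th) y)) <= th * f x + (1 - th) * f y.

Definition subdiff (n : nat) (f : (nat -> R) -> R) (x0 s : nat -> R) : Prop :=
  forall w, f (vadd x0 w) >= f x0 + dot n s w.

Definition scaled_subdiff (n : nat) (lam : R) (f : (nat -> R) -> R) (x0 : nat -> R)
  : (nat -> R) -> Prop :=
  fun v => exists s, subdiff n f x0 s /\ v = vscale lam s.

Definition is_min_dist (n : nat) (C : (nat -> R) -> Prop) (v : nat -> R) (d : R) : Prop :=
  (exists s, C s /\ d = norm n (vsub v s)) /\
  (forall s, C s -> d <= norm n (vsub v s)).

Definition setdist (n : nat) (C : (nat -> R) -> Prop) (v : nat -> R) : R :=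
  epsilon (inhabits 0) (is_min_dist n C v).

(* Gaussian expectation on R^n, as an iterated (improper Riemann) integral
   against the standard normal density:  gauss_exp n F v  <->  E[F(h)] = v. *)
Definition gauss_density (x : R) : R := exp (- (x ^ 2) / 2) / sqrt (2 * PI).

Definition improper_int (F : R -> R) (l : R) : Prop :=
  (forall a b, inhabited (Riemann_integrable F a b)) /\
  forall eps, 0 < eps -> exists A, forall a b (pr : Riemann_integrable F a b),
      a <= - A -> A <= b -> Rabs (RiemannInt pr - l) < eps.

Definition vcons (x : R) (y : nat -> R) : nat -> R :=
  fun i => match i with O => x | S k => y k end.

Fixpoint gauss_exp (n : nat) (F : (nat -> R) -> R) (v : R) : Prop :=
  match n with
  | O => v = F (fun _ => 0)
  | S k => exists G : R -> R,
      (forall x, gauss_exp k (fun y => F (vcons x y)) (G x)) /\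
      improper_int (fun x => G x * gauss_density x) v
  end.

(* gamma_half k = Gamma(k/2) for k >= 1, via Gamma(1/2) = sqrt pi, Gamma(1) = 1,
   Gamma(x+1) = x Gamma(x). *)
Fixpoint gamma_half (k : nat) : R :=
  match k with
  | O => 0
  | S O => sqrt PI
  | S (S O) => 1
  | S (S j) => INR j / 2 * gamma_half j
  end.

Definition gamma_m (m : nat) : R := sqrt 2 * gamma_half (S m) / gamma_half m.

Definition is_glb (E : R -> Prop) (l : R) : Prop :=
  (forall x, E x -> l <= x) /\ (forall b, (forall x, E x -> b <= x) -> b <= l).

(* With the Wallis integrals W(n) = int_0^{pi/2} sin^n,
      gamma_m = sqrt(pi/2) / W(m-1), and log-convexity of n |-> W(n) yields
      gamma_m^2 >= sqrt(m) sqrt(m-1)  (lemma gamma_m_sq_lower).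

   Write p = sqrt m, q = sqrt(m-1), u = sqrt delta,
      D = dist(h, lam df(x0)), G = ||g||, zbar = p ||z||.  For alpha >= ell(t),
      hypotheses (1)-(3) and 1. give
         alpha^2 G^2 + zbar^2 - 2 alpha g.zbar >= (zbar + alpha D + eps)^2
      for one eps > 0 independent of alpha (lemma objective_margin); the heart
      of it is the polynomial inequality threshold_gap, which says that ell(t)
      lies beyond the root of the quadratic in alpha.

   Hence every value in the infimum is >= zbar + eps, and the infimum exists
   (completeness of R) and exceeds ||zbar||. *)

From Stdlib Require Import Reals Lra Lia.
From Coquelicot Require Import Coquelicot.
Open Scope R_scope.

Definition wallis (n : nat) : R := RInt (fun x => sin x ^ n) 0 (PI / 2).

Lemma continuous_sin_pow n x : continuous (fun x => sin x ^ n) x.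
Proof.
  apply (ex_derive_continuous (K := R_AbsRing) (V := R_NormedModule)).
  eexists. apply is_derive_pow, is_derive_sin.
Qed.

Lemma ex_wallis n : ex_RInt (fun x => sin x ^ n) 0 (PI / 2).
Proof.
  apply (ex_RInt_continuous (V := R_CompleteNormedModule)).
  intros; apply continuous_sin_pow.
Qed.

Lemma wallis_0 : wallis 0 = PI / 2.
Proof.
  unfold wallis; simpl. rewrite (RInt_const (V := R_CompleteNormedModule)).
  change (scal (PI / 2 - 0) 1) with ((PI / 2 - 0) * 1). ring.
Qed.

Lemma wallis_1 : wallis 1 = 1.
Proof.
  assert (Hint : is_RInt (fun x => sin x ^ 1) 0 (PI / 2) (- cos (PI / 2) - - cos 0)).
  { apply (is_RInt_derive (V := R_CompleteNormedModule) (fun x => - cos x)).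
    - intros x _. auto_derive; auto. ring.
    - intros x _. apply continuous_sin_pow. }
  unfold wallis. rewrite (is_RInt_unique _ _ _ _ Hint), cos_PI2, cos_0. ring.
Qed.

(* Integration by parts: (n+2) W(n+2) = (n+1) W(n). *)
Lemma wallis_rec n : INR (S (S n)) * wallis (S (S n)) = INR (S n) * wallis n.
Proof.
  set (df := fun x => INR (S (S n)) * sin x ^ (S (S n)) - INR (S n) * sin x ^ n).
  assert (Hint : is_RInt df 0 (PI / 2)
      (- cos (PI / 2) * sin (PI / 2) ^ S n - - cos 0 * sin 0 ^ S n)).
  { apply (is_RInt_derive (V := R_CompleteNormedModule) (fun x => - cos x * sin x ^ S n)).
    - intros x _. unfold df. auto_derive; auto.
      change (match n with 0%nat => 1 | S _ => INR n + 1 end) with (INR (S n)).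
      assert (Hc : cos x * cos x = 1 - sin x * sin x).
      { pose proof (sin2_cos2 x) as E. unfold Rsqr in E. lra. }
      replace (- cos x * (1 * cos x * (INR (S n) * sin x ^ n)))
        with (- (cos x * cos x) * (INR (S n) * sin x ^ n)) by ring.
      rewrite Hc, !S_INR, <- !tech_pow_Rmult. ring.
    - intros x _. unfold df.
      apply (continuous_minus (fun x => INR (S (S n)) * sin x ^ S (S n))
                              (fun x => INR (S n) * sin x ^ n));
        apply (continuous_scal_r _ (fun x => sin x ^ _)), continuous_sin_pow. }
  replace (- cos (PI / 2) * sin (PI / 2) ^ S n - - cos 0 * sin 0 ^ S n) with 0 in Hint
    by (rewrite cos_PI2, sin_0; simpl; ring).
  apply (is_RInt_unique (V := R_CompleteNormedModule)) in Hint. unfold df in Hint.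
  rewrite (RInt_minus (V := R_CompleteNormedModule)
             (fun x => INR (S (S n)) * sin x ^ S (S n)) (fun x => INR (S n) * sin x ^ n))
    in Hint;
    try apply (ex_RInt_scal (V := R_CompleteNormedModule) (fun x => sin x ^ _)), ex_wallis.
  rewrite !(RInt_scal (V := R_CompleteNormedModule) (fun x => sin x ^ _)) in Hint
    by apply ex_wallis.
  assert (E : INR (S (S n)) * wallis (S (S n)) - INR (S n) * wallis n = 0) by exact Hint.
  lra.
Qed.

(* Later arguments only use the recursion and the values above; keep W opaque so
   that arithmetic tactics treat W(n) as an atom instead of unfolding RInt. *)
Opaque wallis.

Lemma wallis_pos n : 0 < wallis n.
Proof.
  assert (Hpair : forall k, 0 < wallis k /\ 0 < wallis (S k)).
  { induction k as [|k [H0 H1]].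
    - rewrite wallis_0, wallis_1. pose proof PI_RGT_0. lra.
    - split; [exact H1|].
      pose proof (wallis_rec k) as Hrec. rewrite !S_INR in Hrec. pose proof (pos_INR k).
      apply (Rmult_lt_reg_l (INR k + 1 + 1)); [lra|].
      rewrite Hrec, Rmult_0_r. apply Rmult_lt_0_compat; lra. }
  apply Hpair.
Qed.

(* W(n) W(n+1) = pi / (2 (n+1)): the product telescopes under the recursion. *)
Lemma wallis_prod n : wallis n * wallis (S n) = PI / (2 * INR (S n)).
Proof.
  induction n as [|n IHn].
  - rewrite wallis_0, wallis_1. simpl. field.
  - pose proof (wallis_rec n) as Hrec.
    pose proof (lt_0_INR (S n) ltac:(lia)). pose proof (lt_0_INR (S (S n)) ltac:(lia)).
    assert (E : wallis (S (S n)) = INR (S n) / INR (S (S n)) * wallis n).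
    { apply (Rmult_eq_reg_l (INR (S (S n)))); [rewrite Hrec; field|]; lra. }
    rewrite E.
    replace (wallis (S n) * (INR (S n) / INR (S (S n)) * wallis n))
      with (INR (S n) / INR (S (S n)) * (wallis n * wallis (S n))) by ring.
    rewrite IHn. field. lra.
Qed.

(* Integrating  sin^k (c - sin)^2 >= 0  over [0, pi/2]. *)
Lemma wallis_quadratic k c : 2 * c * wallis (S k) <= c ^ 2 * wallis k + wallis (S (S k)).
Proof.
  apply (is_RInt_le (fun x => scal (2 * c) (sin x ^ S k))
                    (fun x => plus (scal (c ^ 2) (sin x ^ k)) (sin x ^ S (S k))) 0 (PI / 2)).
  - pose proof PI_RGT_0. lra.
  - apply (is_RInt_scal (V := R_CompleteNormedModule)),
      (RInt_correct (V := R_CompleteNormedModule)), ex_wallis.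
  - apply (is_RInt_plus (V := R_CompleteNormedModule));
      [apply (is_RInt_scal (V := R_CompleteNormedModule))|];
      apply (RInt_correct (V := R_CompleteNormedModule)), ex_wallis.
  - intros x Hx. change (2 * c * sin x ^ S k <= c ^ 2 * sin x ^ k + sin x ^ S (S k)).
    assert (0 <= sin x ^ k) by (apply pow_le, sin_ge_0; lra).
    assert (0 <= sin x ^ k * (c - sin x) ^ 2) by (apply Rmult_le_pos; [lra | apply pow2_ge_0]).
    assert (E : c ^ 2 * sin x ^ k + sin x ^ S (S k) - 2 * c * sin x ^ S k
                = sin x ^ k * (c - sin x) ^ 2) by (simpl; ring).
    lra.
Qed.

(* Log-convexity of the Wallis integrals (Cauchy-Schwarz). *)
Lemma wallis_log_convex k : wallis (S k) ^ 2 <= wallis k * wallis (S (S k)).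
Proof.
  pose proof (wallis_pos (S k)) as Ha. pose proof (wallis_pos (S (S k))) as Hb.
  pose proof (wallis_quadratic k (wallis (S (S k)) / wallis (S k))) as Hq.
  apply (Rmult_le_compat_r (wallis (S k) ^ 2 / wallis (S (S k)))) in Hq;
    [|apply Rdiv_le_0_compat; nra].
  replace (2 * (wallis (S (S k)) / wallis (S k)) * wallis (S k)
           * (wallis (S k) ^ 2 / wallis (S (S k))))
    with (2 * wallis (S k) ^ 2) in Hq by (field; lra).
  replace (((wallis (S (S k)) / wallis (S k)) ^ 2 * wallis k + wallis (S (S k)))
           * (wallis (S k) ^ 2 / wallis (S (S k))))
    with (wallis k * wallis (S (S k)) + wallis (S k) ^ 2) in Hq by (field; lra).
  lra.
Qed.

(* sqrt(k+1) W(k+1) <= sqrt(k+2) W(k+2): log-convexity combined with the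
   recursion (k+2) W(k+2) = (k+1) W(k). *)
Lemma wallis_ratio k : sqrt (INR k + 1) * wallis (S k) <= sqrt (INR k + 2) * wallis (S (S k)).
Proof.
  pose proof (pos_INR k). pose proof (wallis_pos (S k)). pose proof (wallis_pos (S (S k))).
  pose proof (wallis_log_convex k) as Hlc. pose proof (wallis_rec k) as Hrec.
  rewrite !S_INR in Hrec.
  apply Rsqr_incr_0_var; [|apply Rmult_le_pos; [apply sqrt_pos | lra]].
  rewrite !Rsqr_mult, !Rsqr_sqrt by lra. unfold Rsqr.
  apply (Rmult_le_compat_l (INR k + 1)) in Hlc; [|lra].
  replace ((INR k + 1) * (wallis k * wallis (S (S k))))
    with ((INR k + 1 + 1) * wallis (S (S k)) * wallis (S (S k))) in Hlc by (rewrite Hrec; ring).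
  simpl in Hlc. lra.
Qed.

Lemma gamma_half_pos k : (1 <= k)%nat -> 0 < gamma_half k.
Proof.
  assert (Hpair : forall j, 0 < gamma_half (S j) /\ 0 < gamma_half (S (S j))).
  { induction j as [|j [H1 H2]].
    - simpl. split; [apply sqrt_lt_R0, PI_RGT_0 | lra].
    - split; [exact H2|].
      change (gamma_half (S (S (S j)))) with (INR (S j) / 2 * gamma_half (S j)).
      pose proof (lt_0_INR (S j) ltac:(lia)).
      apply Rmult_lt_0_compat; [lra | exact H1]. }
  intros Hk. destruct k as [|k]; [lia | apply Hpair].
Qed.

(* 2 W(n) Gamma((n+2)/2) = sqrt(pi) Gamma((n+1)/2): both sides obey the same
   two-step recursion. *)
Lemma gamma_half_wallis n : 2 * wallis n * gamma_half (S (S n)) = sqrt PI * gamma_half (S n).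
Proof.
  assert (Hpair : forall k,
    2 * wallis k * gamma_half (S (S k)) = sqrt PI * gamma_half (S k) /\
    2 * wallis (S k) * gamma_half (S (S (S k))) = sqrt PI * gamma_half (S (S k))).
  { induction k as [|k [H1 H2]].
    - rewrite wallis_0, wallis_1. simpl.
      pose proof (sqrt_sqrt PI (Rlt_le _ _ PI_RGT_0)). split; lra.
    - split; [exact H2|].
      change (gamma_half (S (S (S (S k))))) with (INR (S (S k)) / 2 * gamma_half (S (S k))).
      change (gamma_half (S (S (S k)))) with (INR (S k) / 2 * gamma_half (S k)).
      replace (2 * wallis (S (S k)) * (INR (S (S k)) / 2 * gamma_half (S (S k))))
        with (INR (S (S k)) * wallis (S (S k)) * gamma_half (S (S k))) by field.
      rewrite wallis_rec.
      replace (INR (S k) * wallis k * gamma_half (S (S k)))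
        with (INR (S k) / 2 * (2 * wallis k * gamma_half (S (S k)))) by field.
      rewrite H1. ring. }
  apply Hpair.
Qed.

(* The key bound on gamma_m = E||g||:  gamma_m^2 >= sqrt(m) sqrt(m-1).
   Indeed gamma_m^2 = pi / (2 W(m-1)^2) = m W(m)/W(m-1) by wallis_prod, and
   W(m)/W(m-1) >= sqrt((m-1)/m) by wallis_ratio. *)
Lemma gamma_m_sq_lower m : (2 <= m)%nat ->
  0 <= gamma_m m /\ sqrt (INR m) * sqrt (INR m - 1) <= gamma_m m ^ 2.
Proof.
  intros Hm. destruct m as [|[|k]]; [lia | lia |].
  pose proof (pos_INR k).
  pose proof (wallis_pos (S k)) as Ha. pose proof (wallis_pos (S (S k))) as Hb.
  pose proof (gamma_half_pos (S (S k)) ltac:(lia)).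
  pose proof (gamma_half_wallis (S k)) as Hgw.
  pose proof (wallis_prod (S k)) as Hprod. pose proof (wallis_ratio k) as Hratio.
  replace (INR (S (S k)) - 1) with (INR k + 1) by (rewrite !S_INR; ring).
  replace (INR (S (S k))) with (INR k + 2) in * by (rewrite !S_INR; ring).
  set (p := sqrt (INR k + 2)) in *. set (q := sqrt (INR k + 1)) in *.
  assert (Hp2 : p * p = INR k + 2) by (apply sqrt_sqrt; lra).
  assert (Hp : 0 < p) by (apply sqrt_lt_R0; lra).
  assert (Hgamma : gamma_m (S (S k)) = sqrt 2 * sqrt PI / (2 * wallis (S k))).
  { assert (E : gamma_half (S (S (S k))) = sqrt PI * gamma_half (S (S k)) / (2 * wallis (S k)))
      by (rewrite <- Hgw; field; lra).
    unfold gamma_m. rewrite E. field. lra. }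
  rewrite Hgamma. split.
  - apply Rmult_le_pos; [apply Rmult_le_pos; apply sqrt_pos|].
    left; apply Rinv_0_lt_compat; lra.
  - replace ((sqrt 2 * sqrt PI / (2 * wallis (S k))) ^ 2)
      with ((sqrt 2 * sqrt 2) * (sqrt PI * sqrt PI) / (4 * wallis (S k) * wallis (S k)))
      by (field; lra).
    rewrite !sqrt_sqrt by (pose proof PI_RGT_0; lra).
    assert (EPI : PI = 2 * (p * p) * (wallis (S k) * wallis (S (S k))))
      by (rewrite Hprod, Hp2; field; lra).
    replace (2 * PI / (4 * wallis (S k) * wallis (S k)))
      with (p * (p * wallis (S (S k))) / wallis (S k)) by (rewrite EPI; field; lra).
    apply (Rmult_le_reg_r (wallis (S k))); [lra|].
    replace (p * (p * wallis (S (S k))) / wallis (S k) * wallis (S k))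
      with (p * (p * wallis (S (S k)))) by (field; lra).
    rewrite Rmult_assoc. apply Rmult_le_compat_l; lra.
Qed.

(* With g0 = sqrt(pq), q <= g0 <= p: the threshold inequality behind ell(t),
   an explicit sum of nonnegative terms with a positive leading one. *)
Lemma threshold_gap (p q g0 u t : R) :
  0 < q -> q <= g0 -> g0 <= p -> g0 * g0 = p * q -> 0 <= u -> 0 < t -> t < q - u ->
  p * (q - u - t) * (2 * u + t) < 2 * (u + t) * ((g0 - t / 4) ^ 2 - (u + t / 4) ^ 2).
Proof.
  intros Hq Hqg Hgp Hg0 Hu Ht Htq.
  assert (E : 2 * (u + t) * ((g0 - t / 4) ^ 2 - (u + t / 4) ^ 2) - p * (q - u - t) * (2 * u + t)
              = p * q * t + (u + t) * u * (2 * p - 2 * u - t) + (u + t) * t * (p - g0)).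
  { replace ((g0 - t / 4) ^ 2) with (g0 * g0 - g0 * t / 2 + t * t / 16) by field.
    rewrite Hg0. field. }
  assert (0 < p * q * t) by (apply Rmult_lt_0_compat; [apply Rmult_lt_0_compat|]; lra).
  assert (0 <= (u + t) * u * (2 * p - 2 * u - t))
    by (apply Rmult_le_pos; [apply Rmult_le_pos|]; lra).
  assert (0 <= (u + t) * t * (p - g0)) by (apply Rmult_le_pos; [apply Rmult_le_pos|]; lra).
  lra.
Qed.

(* A single eps > 0 absorbs the second-order terms of (zbar + alpha D + eps)^2
   against a gain alpha * mu that grows linearly in alpha >= ell. *)
Lemma uniform_slack (Z D ell mu : R) :
  0 < Z -> 0 <= D -> 0 < ell -> 0 < mu ->
  exists eps, 0 < eps /\ forall alpha, ell <= alpha ->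
    eps ^ 2 + 2 * Z * eps + 2 * alpha * D * eps <= alpha * mu.
Proof.
  intros HZ HD Hell Hmu.
  set (eps := Rmin Z (Rmin (mu / (4 * (D + 1))) (ell * mu / (6 * Z)))).
  assert (He1 : eps <= Z) by apply Rmin_l.
  assert (He2 : eps <= mu / (4 * (D + 1))) by (eapply Rle_trans; [apply Rmin_r | apply Rmin_l]).
  assert (He3 : eps <= ell * mu / (6 * Z)) by (eapply Rle_trans; [apply Rmin_r | apply Rmin_r]).
  assert (Hep : 0 < eps).
  { apply Rmin_glb_lt; [exact HZ|]. apply Rmin_glb_lt; apply Rdiv_lt_0_compat; nra. }
  exists eps. split; [exact Hep|]. intros alpha Ha.
  assert (HDeps : 2 * D * eps <= mu / 2).
  { apply (Rmult_le_compat_r (4 * (D + 1))) in He2; [|lra].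
    replace (mu / (4 * (D + 1)) * (4 * (D + 1))) with mu in He2 by (field; lra). nra. }
  assert (HZeps : 3 * Z * eps <= ell * mu / 2).
  { apply (Rmult_le_compat_r (6 * Z)) in He3; [|lra].
    replace (ell * mu / (6 * Z) * (6 * Z)) with (ell * mu) in He3 by (field; lra). lra. }
  assert (eps * eps <= Z * eps) by (apply Rmult_le_compat_r; lra).
  assert (ell * mu <= alpha * mu) by (apply Rmult_le_compat_r; lra).
  assert (alpha * (2 * D * eps) <= alpha * (mu / 2)) by (apply Rmult_le_compat_l; lra).
  simpl. lra.
Qed.

(* At alpha = ell(t) the quadratic coefficient beats the linear one:
   zbar (t/2 + 2D) < ell (G^2 - D^2), for 0 <= D <= sqrt delta + t/4. *)
Lemma threshold_margin (p q u t G D nz gam : R) :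
  0 < nz -> 0 < q -> q <= p -> 0 <= u -> 0 < t -> t < q - u ->
  0 <= gam -> p * q <= gam ^ 2 -> gam - t / 4 <= G -> 0 <= D -> D <= u + t / 4 ->
  p * nz * (t / 2 + 2 * D) < 2 * nz * (u + t) / (q - u - t) * (G ^ 2 - D ^ 2).
Proof.
  intros Hnz Hq Hqp Hu Ht Htq Hgam Hgam2 HG HD0 HD.
  set (g0 := sqrt (p * q)).
  assert (Hg0 : g0 * g0 = p * q) by (apply sqrt_sqrt; nra).
  assert (Hg0q : q <= g0) by (apply Rsqr_incr_0_var; unfold Rsqr; [nra | apply sqrt_pos]).
  assert (Hg0p : g0 <= p) by (apply Rsqr_incr_0_var; unfold Rsqr; nra).
  assert (Hg0gam : g0 <= gam) by (apply Rsqr_incr_0_var; unfold Rsqr; [simpl in Hgam2; nra | lra]).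
  assert (HK : (g0 - t / 4) ^ 2 - (u + t / 4) ^ 2 <= G ^ 2 - D ^ 2).
  { assert (0 <= g0 - t / 4) by lra.
    assert ((g0 - t / 4) ^ 2 <= G ^ 2) by (apply pow_incr; lra).
    assert (D ^ 2 <= (u + t / 4) ^ 2) by (apply pow_incr; lra).
    lra. }
  pose proof (threshold_gap p q g0 u t Hq Hg0q Hg0p Hg0 Hu Ht Htq) as Hgap.
  assert (Hs : 0 < q - u - t) by lra.
  apply (Rle_lt_trans _ (p * nz * (2 * u + t))).
  { apply Rmult_le_compat_l; [apply Rmult_le_pos|]; lra. }
  replace (2 * nz * (u + t) / (q - u - t) * (G ^ 2 - D ^ 2))
    with (nz * (2 * (u + t) * (G ^ 2 - D ^ 2)) / (q - u - t)) by (field; lra).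
  apply (Rmult_lt_reg_r (q - u - t)); [exact Hs|].
  replace (nz * (2 * (u + t) * (G ^ 2 - D ^ 2)) / (q - u - t) * (q - u - t))
    with (nz * (2 * (u + t) * (G ^ 2 - D ^ 2))) by (field; lra).
  replace (p * nz * (2 * u + t) * (q - u - t)) with (nz * (p * (q - u - t) * (2 * u + t)))
    by ring.
  apply Rmult_lt_compat_l; [exact Hnz|].
  assert (2 * (u + t) * ((g0 - t / 4) ^ 2 - (u + t / 4) ^ 2) <= 2 * (u + t) * (G ^ 2 - D ^ 2))
    by (apply Rmult_le_compat_l; lra).
  lra.
Qed.

(* The uniform margin: sqrt(alpha^2 G^2 + zbar^2 - 2 alpha c) - alpha D
   >= zbar + eps for all alpha >= ell(t).  A negative D is replaced by 0. *)
Lemma objective_margin (p q u t G D c nz gam : R) :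
  0 < nz -> 0 < q -> q <= p -> 0 <= u -> 0 < t -> t < q - u ->
  0 <= gam -> p * q <= gam ^ 2 -> gam - t / 4 <= G -> D <= u + t / 4 ->
  c <= t / 4 * (p * nz) ->
  exists eps, 0 < eps /\ forall alpha,
    2 * nz * (u + t) / (q - u - t) <= alpha ->
    p * nz + eps <= sqrt (alpha ^ 2 * G ^ 2 + (p * nz) ^ 2 - 2 * alpha * c) - alpha * D.
Proof.
  intros Hnz Hq Hqp Hu Ht Htq Hgam Hgam2 HG HD Hc.
  set (D' := Rmax D 0). set (zbar := p * nz) in *.
  set (ell := 2 * nz * (u + t) / (q - u - t)).
  set (K := G ^ 2 - D' ^ 2). set (B := zbar * (t / 2 + 2 * D')).
  assert (HD'0 : 0 <= D') by apply Rmax_r.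
  assert (HDD' : D <= D') by apply Rmax_l.
  assert (HZ : 0 < zbar) by (apply Rmult_lt_0_compat; lra).
  assert (Hell : 0 < ell) by (apply Rdiv_lt_0_compat; [apply Rmult_lt_0_compat|]; lra).
  assert (Hmu : B < ell * K).
  { apply (threshold_margin p q u t G D' nz gam); auto. apply Rmax_lub; lra. }
  assert (HB : 0 < B) by (apply Rmult_lt_0_compat; lra).
  destruct (uniform_slack zbar D' ell (ell * K - B)) as [eps [Heps Hslack]]; try lra.
  exists eps. split; [exact Heps|]. intros alpha Ha.
  assert (HK : 0 < K) by (destruct (Rle_or_lt K 0); [assert (ell * K <= 0) by nra; lra | auto]).
  assert (Hgain : alpha * (ell * K - B) <= alpha * (alpha * K - B))
    by (apply Rmult_le_compat_l; [lra | apply Rplus_le_compat_r, Rmult_le_compat_r; lra]).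
  assert (Hcross : 2 * alpha * c <= alpha * (t / 2) * zbar).
  { replace (alpha * (t / 2) * zbar) with (2 * alpha * (t / 4 * zbar)) by field.
    apply Rmult_le_compat_l; lra. }
  pose proof (Hslack alpha Ha) as Hs.
  assert (Hsq : (zbar + alpha * D' + eps) ^ 2
                <= alpha ^ 2 * G ^ 2 + zbar ^ 2 - 2 * alpha * c).
  { assert (E : (zbar + alpha * D' + eps) ^ 2 + alpha * (alpha * K - B)
                = alpha ^ 2 * G ^ 2 + zbar ^ 2 - alpha * (t / 2) * zbar
                  + (eps ^ 2 + 2 * zbar * eps + 2 * alpha * D' * eps))
      by (unfold K, B; ring).
    lra. }
  assert (Hroot : zbar + alpha * D' + eps <= sqrt (alpha ^ 2 * G ^ 2 + zbar ^ 2 - 2 * alpha * c)).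
  { rewrite <- (sqrt_pow2 (zbar + alpha * D' + eps)) by nra. apply sqrt_le_1_alt, Hsq. }
  assert (alpha * D <= alpha * D') by (apply Rmult_le_compat_l; lra).
  lra.
Qed.

Lemma glb_exists_gt (E : R -> Prop) (a b : R) :
  (exists x, E x) -> (forall x, E x -> b <= x) -> a < b -> exists L, is_glb E L /\ L > a.
Proof.
  intros [x0 Hx0] Hb Hab.
  destruct (completeness (fun y => E (- y))) as [M [HM1 HM2]].
  - exists (- b). intros y Hy. apply Hb in Hy. lra.
  - exists (- x0). rewrite Ropp_involutive. exact Hx0.
  - exists (- M). split; [split|].
    + intros x Hx. assert (Hneg : E (- - x)) by (rewrite Ropp_involutive; exact Hx).
      apply HM1 in Hneg. lra.
    + intros b' Hb'. assert (M <= - b') by (apply HM2; intros y Hy; apply Hb' in Hy; lra).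
      lra.
    + assert (M <= - b) by (apply HM2; intros y Hy; apply Hb in Hy; lra). lra.
Qed.

Lemma vsum_ext n F G : (forall i, F i = G i) -> vsum n F = vsum n G.
Proof. intros H; induction n as [|n IHn]; simpl; [reflexivity | rewrite IHn, H; reflexivity]. Qed.

Lemma vsum_scal n c F : vsum n (fun i => c * F i) = c * vsum n F.
Proof. induction n as [|n IHn]; simpl; [ring | rewrite IHn; ring]. Qed.

Lemma vsum_nonneg n F : (forall i, (i < n)%nat -> 0 <= F i) -> 0 <= vsum n F.
Proof.
  induction n as [|n IHn]; simpl; intros H; [lra|].
  assert (0 <= vsum n F) by (apply IHn; intros; apply H; lia).
  assert (0 <= F n) by (apply H; lia). lra.
Qed.

Lemma vsum_pos n F i :
  (forall j, (j < n)%nat -> 0 <= F j) -> (i < n)%nat -> 0 < F i -> 0 < vsum n F.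
Proof.
  induction n as [|n IHn]; simpl; intros H Hi Hf; [lia|].
  assert (0 <= vsum n F) by (apply vsum_nonneg; intros; apply H; lia).
  assert (0 <= F n) by (apply H; lia).
  destruct (Nat.eq_dec i n) as [->|Hne]; [lra|].
  assert (0 < vsum n F) by (apply IHn; [intros; apply H; lia | lia | exact Hf]). lra.
Qed.

Lemma norm_scale m c z : 0 <= c -> norm m (vscale c z) = c * norm m z.
Proof.
  intros Hc. unfold norm, dot, vscale.
  rewrite (vsum_ext m _ (fun i => (c * c) * (z i * z i))) by (intros; ring).
  rewrite vsum_scal, sqrt_mult_alt, sqrt_square by nra. reflexivity.
Qed.

Lemma norm_pos m z : (exists i, (i < m)%nat /\ z i <> 0) -> 0 < norm m z.
Proof.
  intros [i [Hi Hz]]. unfold norm, dot. apply sqrt_lt_R0.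
  apply (vsum_pos m _ i); [intros; nra | exact Hi | nra].
Qed.

Theorem lemma4 (m n : nat) (f : (nat -> R) -> R) (x0 : nat -> R) (lam : R)
  (z g h : nat -> R) (delta t : R) :
  (2 <= m)%nat ->
  depends_only_on n f -> convex f ->
  (exists x, f x < f x0) ->
  0 <= lam ->
  (exists i, (i < m)%nat /\ z i <> 0) ->
  gauss_exp n (fun v => (setdist n (scaled_subdiff n lam f x0) v) ^ 2) delta ->
  0 < t -> t < sqrt (INR m - 1) - sqrt delta ->
  norm m g >= gamma_m m - t / 4 ->
  setdist n (scaled_subdiff n lam f x0) h <= sqrt delta + t / 4 ->
  dot m g (vscale (sqrt (INR m)) z) <= t / 4 * norm m (vscale (sqrt (INR m)) z) ->
  exists L,
    is_glb (fun r => exists alpha,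
               2 * norm m z * (sqrt delta + t) / (sqrt (INR m - 1) - sqrt delta - t)
                 <= alpha /\
               r = sqrt (alpha ^ 2 * norm m g ^ 2
                         + norm m (vscale (sqrt (INR m)) z) ^ 2
                         - 2 * alpha * dot m g (vscale (sqrt (INR m)) z))
                   - alpha * setdist n (scaled_subdiff n lam f x0) h) L
    /\ L > norm m (vscale (sqrt (INR m)) z).
Proof.
  intros Hm _ _ _ _ Hz _ Ht Htq Hg Hh Hgz.
  destruct (gamma_m_sq_lower m Hm) as [Hgam0 Hgam].
  pose proof (norm_pos m z Hz) as Hnz.
  assert (Hmr : 2 <= INR m) by (apply (le_INR 2 m) in Hm; simpl in Hm; lra).
  assert (Hq : 0 < sqrt (INR m - 1)) by (apply sqrt_lt_R0; lra).
  assert (Hqp : sqrt (INR m - 1) <= sqrt (INR m)) by (apply sqrt_le_1_alt; lra).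
  rewrite norm_scale in * by apply sqrt_pos.
  destruct (objective_margin (sqrt (INR m)) (sqrt (INR m - 1)) (sqrt delta) t (norm m g)
              (setdist n (scaled_subdiff n lam f x0) h) (dot m g (vscale (sqrt (INR m)) z))
              (norm m z) (gamma_m m))
    as [eps [Heps Hmargin]]; try assumption; try lra.
  { apply sqrt_pos. }
  apply (glb_exists_gt _ _ (sqrt (INR m) * norm m z + eps)); [| | lra].
  - eexists. exists (2 * norm m z * (sqrt delta + t) / (sqrt (INR m - 1) - sqrt delta - t)).
    split; [apply Rle_refl | reflexivity].
  - intros r [alpha [Ha ->]]. apply Hmargin, Ha.
Qed.
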